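(* For every $D>0$ there exists $\delta=\delta(D)>0$ such that the following holds. For any integers $K,N\geq 8$ and any measurable quasi-periodic function $G$ on $\mathbb{R}^2$ with $|G|\geq D$ almost everywhere, there exists a measurable set $S\subseteq[0,1]^2$ of Lebesgue measure at least $1/(NK)$ such that every $(x,y)\in S$ satisfies $$|G(x+1/K,y)-G(x,y)|\geq\delta\quad\text{or}\quad |G(x,y+1/N)-G(x,y)|\geq\delta.$$
   Context: A function $G$ on $\mathbb{R}^2$ is quasi-periodic if $G(x,y+1)=G(x,y)$ and $G(x+1,y)=e^{2\pi i y}G(x,y)$ for all $(x,y)\in\mathbb{R}^2$. *)

From Stdlib Require Import Reals Lra.
Open Scope R_scope.

Definition Cpx := (R * R)%type.
Definition Cmul (z w : Cpx) : Cpx :=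
  (fst z * fst w - snd z * snd w, fst z * snd w + snd z * fst w).
Definition Csub (z w : Cpx) : Cpx := (fst z - fst w, snd z - snd w).
Definition Cnorm (z : Cpx) : R := sqrt (fst z ^ 2 + snd z ^ 2).
Definition Cexpi (t : R) : Cpx := (cos t, sin t).

Definition quasi_periodic (G : R -> R -> Cpx) : Prop :=
  forall x y, G x (y + 1) = G x y /\ G (x + 1) y = Cmul (Cexpi (2 * PI * y)) (G x y).

Definition set2 := R -> R -> Prop.

Record rect := Rect { ra1 : R; rb1 : R; ra2 : R; rb2 : R }.
Definition in_rect (r : rect) (x y : R) : Prop :=
  ra1 r <= x <= rb1 r /\ ra2 r <= y <= rb2 r.
Definition area (r : rect) : R :=
  Rmax 0 (rb1 r - ra1 r) * Rmax 0 (rb2 r - ra2 r).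

Definition covers (c : nat -> rect) (A : set2) : Prop :=
  forall x y, A x y -> exists k, in_rect (c k) x y.

(* Lebesgue outer measure lambda*(A) = inf over countable rectangle covers
   of the sum of areas.  We express  lambda*(A) <= v  and  lambda*(A) >= v. *)
Definition outer_le (A : set2) (v : R) : Prop :=
  forall eps, 0 < eps -> exists c : nat -> rect,
    covers c A /\ forall n, sum_f_R0 (fun k => area (c k)) n <= v + eps.

Definition outer_ge (A : set2) (v : R) : Prop :=
  forall c : nat -> rect, covers c A ->
    forall eps, 0 < eps -> exists n, v - eps < sum_f_R0 (fun k => area (c k)) n.

Definition null_set (A : set2) : Prop := outer_le A 0.

Definition open2 (U : set2) : Prop :=
  forall x y, U x y -> exists r, 0 < r /\
    forall x' y', (x' - x) ^ 2 + (y' - y) ^ 2 < r ^ 2 -> U x' y'.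

Definition measurable2 (A : set2) : Prop :=
  forall eps, 0 < eps -> exists U, open2 U /\ (forall x y, A x y -> U x y) /\
    outer_le (fun x y => U x y /\ ~ A x y) eps.

Definition measurable_fun (G : R -> R -> Cpx) : Prop :=
  forall V : set2, open2 V -> measurable2 (fun x y => V (fst (G x y)) (snd (G x y))).

From Stdlib Require Import Reals Lra Lia ZArith Cantor IndefiniteDescription Classical
  Permutation List Rtopology.
Open Scope R_scope.

(* Take delta = D/10 and let S be the jump set: the points of
   [0,1]^2 where |G(x + 1/K, y) - G(x, y)| or |G(x, y + 1/N) - G(x, y)| exceeds
   delta.  For the measure bound, fix (x, y) in
   the first tile [0,1/K] x [0,1/N] and follow G on the grid points
   (x + j/K, y + l/N).  If |G| >= D there and every increment were <= D/10,
   the turning angle along each grid step would lie in (-pi/2, pi/2), the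
   angles would have zero circulation around every cell, and a discrete Stokes
   formula would contradict the total winding 2 pi forced by the factor
   e^{2 pi i y} of quasi-periodicity.  So every point of the first tile has a
   grid translate either in the null set {|G| < D} or in S (inside the
   corresponding tile).  Translating the tiles back onto the first one does
   not increase outer measure, hence lambda*(S) >= area of a tile = 1/(NK). *)

Fixpoint rsum (f : nat -> R) (n : nat) : R :=
  match n with O => 0 | S n => rsum f n + f n end.

Lemma sum_f_R0_rsum f n : sum_f_R0 f n = rsum f (S n).
Proof. induction n; simpl in *; [lra | rewrite IHn; reflexivity]. Qed.

Lemma rsum_ext f g n : (forall i, (i < n)%nat -> f i = g i) -> rsum f n = rsum g n.
Proof.
  induction n; intros H; simpl; [lra |].
  rewrite IHn, H; [lra | lia | intros; apply H; lia].
Qed.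

Lemma rsum_le f g n : (forall i, (i < n)%nat -> f i <= g i) -> rsum f n <= rsum g n.
Proof.
  induction n; intros H; simpl; [lra |].
  assert (f n <= g n) by (apply H; lia).
  assert (rsum f n <= rsum g n) by (apply IHn; intros; apply H; lia). lra.
Qed.

Lemma rsum_const c n : rsum (fun _ => c) n = INR n * c.
Proof. induction n; simpl rsum; [simpl; ring | rewrite IHn, S_INR; ring]. Qed.

Lemma rsum_ge0 f n : (forall i, (i < n)%nat -> 0 <= f i) -> 0 <= rsum f n.
Proof.
  intros H. replace 0 with (rsum (fun _ => 0) n) by (rewrite rsum_const; ring).
  apply rsum_le; auto.
Qed.

Lemma rsum_plus f g n : rsum (fun i => f i + g i) n = rsum f n + rsum g n.
Proof. induction n; simpl; lra. Qed.

Lemma rsum_minus f g n : rsum (fun i => f i - g i) n = rsum f n - rsum g n.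
Proof. induction n; simpl; lra. Qed.

Lemma rsum_scal c f n : rsum (fun i => c * f i) n = c * rsum f n.
Proof. induction n; simpl; [ring | rewrite IHn; ring]. Qed.

Lemma rsum_mul_r f c n : rsum (fun i => f i * c) n = rsum f n * c.
Proof. induction n; simpl; [ring | rewrite IHn; ring]. Qed.

Lemma rsum_tele a n : rsum (fun i => a (S i) - a i) n = a n - a O.
Proof. induction n; simpl; [ring | rewrite IHn; ring]. Qed.

Lemma rsum_mono f n m : (forall i, 0 <= f i) -> (n <= m)%nat -> rsum f n <= rsum f m.
Proof. intros H Hle. induction Hle; simpl; [lra |]. specialize (H m). lra. Qed.

Lemma rsum_ge_term f n k : (forall i, 0 <= f i) -> (k < n)%nat -> f k <= rsum f n.
Proof.
  intros Hf Hk. eapply Rle_trans; [| apply (rsum_mono f (S k) n); auto].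
  simpl. pose proof (rsum_ge0 f k (fun i _ => Hf i)). lra.
Qed.

Lemma rsum_cut F K n :
  (forall i, (K <= i)%nat -> F i = 0) -> (forall i, 0 <= F i) -> rsum F n <= rsum F K.
Proof.
  intros H0 Hp. destruct (Nat.le_gt_cases n K); [apply rsum_mono; auto |].
  induction H; cbn [rsum]; rewrite H0 by lia; lra.
Qed.

Lemma rsum_swap (f : nat -> nat -> R) n m :
  rsum (fun i => rsum (fun j => f i j) m) n = rsum (fun j => rsum (fun i => f i j) n) m.
Proof.
  induction n; simpl.
  - symmetry. induction m; simpl; [lra | rewrite IHm; lra].
  - rewrite IHn, <- rsum_plus. reflexivity.
Qed.

Lemma rsum_geom eps n : 0 <= eps -> rsum (fun i => eps / 2 ^ S i) n <= eps.
Proof.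
  intros He. assert (H : rsum (fun i => eps / 2 ^ S i) n = eps - eps / 2 ^ n).
  { induction n; cbn [rsum]; [simpl; field |].
    rewrite IHn. simpl. field. apply pow_nonzero; lra. }
  rewrite H. assert (0 < 2 ^ n) by (apply pow_lt; lra).
  assert (0 <= eps / 2 ^ n) by (apply Rmult_le_pos; [lra | left; apply Rinv_0_lt_compat; lra]). lra.
Qed.

(* Summing a nonnegative f over the first M points of the Cantor enumeration
   of nat * nat costs at most the sum over the square [0, M)^2: the Cantor
   pairing is injective and its k-th point has both coordinates <= k. *)
Section CantorReindex.

Definition lsum (f : nat * nat -> R) (l : list (nat * nat)) : R :=
  fold_right (fun p acc => f p + acc) 0 l.

Lemma lsum_app f l1 l2 : lsum f (l1 ++ l2) = lsum f l1 + lsum f l2.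
Proof. induction l1; simpl; [lra | rewrite IHl1; lra]. Qed.

Lemma lsum_perm f l1 l2 : Permutation l1 l2 -> lsum f l1 = lsum f l2.
Proof. induction 1; simpl; lra. Qed.

Lemma lsum_ge0 f l : (forall p, 0 <= f p) -> 0 <= lsum f l.
Proof. intros H; induction l; simpl; [lra | specialize (H a); lra]. Qed.

Lemma lsum_incl f l1 : (forall p, 0 <= f p) -> NoDup l1 ->
  forall l2, incl l1 l2 -> lsum f l1 <= lsum f l2.
Proof.
  intros Hf Hnd. induction Hnd as [|a l1 Ha Hnd IH]; intros l2 Hi.
  - apply lsum_ge0; auto.
  - assert (Hin : In a l2) by (apply Hi; left; auto).
    destruct (in_split _ _ Hin) as [u [v ->]].
    rewrite (lsum_perm f _ _ (Permutation_sym (Permutation_middle u v a))).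
    simpl. assert (lsum f l1 <= lsum f (u ++ v)); [| lra].
    apply IH. intros x Hx.
    assert (Hx2 : In x (u ++ a :: v)) by (apply Hi; right; auto).
    apply in_app_or in Hx2. apply in_or_app.
    destruct Hx2 as [H | [H | H]]; auto. subst; contradiction.
Qed.

Lemma lsum_map_seq (g : nat -> nat * nat) f n :
  lsum f (map g (seq 0 n)) = rsum (fun k => f (g k)) n.
Proof. induction n; [reflexivity |]. rewrite seq_S, map_app, lsum_app, IHn. simpl. lra. Qed.

Lemma lsum_prod f n m :
  lsum f (list_prod (seq 0 n) (seq 0 m)) = rsum (fun i => rsum (fun j => f (i, j)) m) n.
Proof.
  rewrite list_prod_as_flat_map. induction n; [reflexivity |].
  rewrite seq_S, flat_map_app, lsum_app, IHn. simpl. rewrite app_nil_r.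
  rewrite (lsum_map_seq (pair n)). lra.
Qed.

Lemma cantor_reindex (f : nat * nat -> R) M : (forall p, 0 <= f p) ->
  rsum (fun k => f (of_nat k)) M <= rsum (fun i => rsum (fun j => f (i, j)) M) M.
Proof.
  intros Hf. rewrite <- lsum_map_seq, <- lsum_prod. apply lsum_incl; auto.
  - apply NoDup_map_NoDup_ForallPairs; [| apply seq_NoDup].
    intros x y _ _ E. rewrite <- (cancel_to_of x), <- (cancel_to_of y), E. reflexivity.
  - intros [a b] Hin. apply in_map_iff in Hin. destruct Hin as [k [Hk Hin]].
    apply in_seq in Hin. pose proof (to_nat_non_decreasing a b) as Hnd.
    rewrite <- Hk, cancel_to_of in Hnd. apply in_prod; apply in_seq; lia.
Qed.

End CantorReindex.

Lemma exists_nat_above r : exists n : nat, (0 < n)%nat /\ r < INR n.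
Proof.
  destruct (INR_archimed 1 (Rmax r 0)) as [n Hn]; [lra |].
  assert (r <= Rmax r 0 /\ 0 <= Rmax r 0) as [H1 H2] by (split; [apply Rmax_l | apply Rmax_r]).
  exists n. split; [| lra]. destruct n; [simpl in Hn; lra | lia].
Qed.


Definition empty_rect := Rect 1 0 1 0.

Lemma area_empty_rect : area empty_rect = 0.
Proof. unfold area, empty_rect; simpl. rewrite Rmax_left; lra. Qed.

Lemma area_ge0 r : 0 <= area r.
Proof. unfold area. apply Rmult_le_pos; apply Rmax_l. Qed.

Lemma outer_le_mono (A B : set2) v :
  (forall x y, A x y -> B x y) -> outer_le B v -> outer_le A v.
Proof.
  intros H HB eps He. destruct (HB eps He) as [c [Hc Hs]].
  exists c; split; auto. intros x y Hxy. apply Hc, H, Hxy.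
Qed.

Lemma outer_le_weaken A v w : outer_le A v -> v <= w -> outer_le A w.
Proof.
  intros H Hvw eps He. destruct (H eps He) as [c [Hc Hs]].
  exists c; split; auto. intros n; specialize (Hs n); lra.
Qed.

Lemma outer_le_of_cover A (c : nat -> rect) v :
  covers c A -> (forall n, sum_f_R0 (fun k => area (c k)) n <= v) -> outer_le A v.
Proof. intros Hc Hs eps He. exists c. split; auto. intros n; specialize (Hs n); lra. Qed.

Lemma outer_le_finite (A : set2) (r : nat -> rect) n :
  (forall x y, A x y -> exists k, (k < n)%nat /\ in_rect (r k) x y) ->
  outer_le A (rsum (fun k => area (r k)) n).
Proof.
  intros Hcov.
  apply (outer_le_of_cover A (fun k => if Nat.ltb k n then r k else empty_rect)).
  - intros x y Hxy. destruct (Hcov x y Hxy) as [k [Hk Hin]]. exists k.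
    replace (Nat.ltb k n) with true by (symmetry; apply Nat.ltb_lt; auto). exact Hin.
  - intros m. rewrite sum_f_R0_rsum. eapply Rle_trans.
    + apply (rsum_cut _ n).
      * intros i Hi. replace (Nat.ltb i n) with false by (symmetry; apply Nat.ltb_ge; auto).
        apply area_empty_rect.
      * intros i. apply area_ge0.
    + right. apply rsum_ext. intros i Hi.
      replace (Nat.ltb i n) with true by (symmetry; apply Nat.ltb_lt; auto). reflexivity.
Qed.

Lemma outer_le_empty v : 0 <= v -> outer_le (fun _ _ => False) v.
Proof.
  intros Hv. apply (outer_le_weaken _ (rsum (fun k => area empty_rect) 0)); [| simpl; lra].
  apply outer_le_finite. intros x y [].
Qed.

Definition merge_covers (c : nat -> nat -> rect) : nat -> rect :=
  fun k => c (fst (of_nat k)) (snd (of_nat k)).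

Lemma merge_covers_covers (c : nat -> nat -> rect) (A : nat -> set2) :
  (forall n, covers (c n) (A n)) -> covers (merge_covers c) (fun x y => exists n, A n x y).
Proof.
  intros H x y [n Hn]. destruct (H n x y Hn) as [m Hm].
  exists (to_nat (n, m)). unfold merge_covers. rewrite cancel_of_to. exact Hm.
Qed.

Lemma merge_covers_sum (c : nat -> nat -> rect) E :
  (forall M, rsum (fun i => rsum (fun j => area (c i j)) M) M <= E) ->
  forall M, rsum (fun k => area (merge_covers c k)) M <= E.
Proof.
  intros H M. eapply Rle_trans; [| apply (H M)].
  apply (cantor_reindex (fun p => area (c (fst p) (snd p)))). intros; apply area_ge0.
Qed.

Lemma outer_le_Union (A : nat -> set2) (e : nat -> R) E :
  (forall n, outer_le (A n) (e n)) -> (forall M, rsum e M <= E) ->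
  outer_le (fun x y => exists n, A n x y) E.
Proof.
  intros HA HE eps He.
  assert (Hc : forall n, exists c, covers c (A n) /\
     forall m, sum_f_R0 (fun k => area (c k)) m <= e n + eps / 2 ^ S n).
  { intros n. apply HA. apply Rdiv_lt_0_compat; [lra | apply pow_lt; lra]. }
  apply functional_choice in Hc. destruct Hc as [c Hc].
  exists (merge_covers c). split.
  - apply merge_covers_covers. intros n; apply Hc.
  - intros m. rewrite sum_f_R0_rsum. apply merge_covers_sum.
    intros [|M]; [simpl; pose proof (HE O); simpl in *; lra |].
    eapply Rle_trans.
    + apply (rsum_le _ (fun i => e i + eps / 2 ^ S i)). intros i _.
      rewrite <- sum_f_R0_rsum. apply (proj2 (Hc i)).
    + rewrite rsum_plus. pose proof (HE (S M)). pose proof (rsum_geom eps (S M)). lra.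
Qed.

Lemma outer_le_ge0 A v : outer_le A v -> 0 <= v.
Proof.
  intros H. apply Rnot_lt_le. intros Hv.
  destruct (H (- v / 2)) as [c [_ Hs]]; [lra |].
  specialize (Hs O). simpl in Hs. pose proof (area_ge0 (c O)). lra.
Qed.

Lemma outer_le_union2 (A B : set2) va vb :
  outer_le A va -> outer_le B vb -> outer_le (fun x y => A x y \/ B x y) (va + vb).
Proof.
  intros HA HB. pose proof (outer_le_ge0 _ _ HA). pose proof (outer_le_ge0 _ _ HB).
  eapply outer_le_mono.
  2: { apply (outer_le_Union (fun n => match n with 0 => A | 1 => B | _ => fun _ _ => False end)
                             (fun n => match n with 0 => va | 1 => vb | _ => 0 end)).
       - intros [|[|n]]; auto. apply outer_le_empty; lra.
       - intros [|[|M]]; simpl; try lra. induction M; simpl in *; lra. }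
  intros x y [H1 | H1]; [exists O | exists 1%nat]; exact H1.
Qed.

Lemma outer_le_union_null (A B : set2) v e : null_set A -> outer_le B v -> 0 < e ->
  outer_le (fun x y => A x y \/ B x y) (v + e).
Proof.
  intros HA HB He. rewrite Rplus_comm. apply outer_le_union2; auto.
  intros eps Heps. destruct (HA (e + eps)) as [c [Hc Hs]]; [lra |].
  exists c. split; auto. intros n; specialize (Hs n); lra.
Qed.

Lemma null_Union (A : nat -> set2) :
  (forall n, null_set (A n)) -> null_set (fun x y => exists n, A n x y).
Proof.
  intros HA. apply (outer_le_Union A (fun _ => 0)); auto.
  intros M. rewrite rsum_const. lra.
Qed.

Definition shift_rect (a b : R) (r : rect) : rect :=
  Rect (ra1 r - a) (rb1 r - a) (ra2 r - b) (rb2 r - b).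

Lemma area_shift_rect a b r : area (shift_rect a b r) = area r.
Proof.
  unfold area, shift_rect; simpl.
  replace (rb1 r - a - (ra1 r - a)) with (rb1 r - ra1 r) by ring.
  replace (rb2 r - b - (ra2 r - b)) with (rb2 r - ra2 r) by ring. reflexivity.
Qed.

Lemma in_shift_rect a b r x y : in_rect r (x + a) (y + b) -> in_rect (shift_rect a b r) x y.
Proof. unfold in_rect, shift_rect; simpl. lra. Qed.

Lemma outer_le_shift (A : set2) a b v :
  outer_le A v -> outer_le (fun x y => A (x + a) (y + b)) v.
Proof.
  intros HA eps He. destruct (HA eps He) as [c [Hc Hs]].
  exists (fun k => shift_rect a b (c k)). split.
  - intros x y H. destruct (Hc _ _ H) as [k Hk]. exists k. apply in_shift_rect, Hk.
  - intros n. rewrite sum_f_R0_rsum, (rsum_ext _ (fun k => area (c k))), <- sum_f_R0_rsum; auto.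
    intros; apply area_shift_rect.
Qed.


Lemma meas_ext (A B : set2) :
  (forall x y, A x y <-> B x y) -> measurable2 A -> measurable2 B.
Proof.
  intros H HA eps He. destruct (HA eps He) as [U [HU [HAU Hl]]].
  exists U. split; [auto | split].
  - intros x y Hb; apply HAU, H, Hb.
  - eapply outer_le_mono; [| exact Hl]. intros x y [H1 H2]. split; auto. rewrite H; auto.
Qed.

Lemma meas_open U : open2 U -> measurable2 U.
Proof.
  intros HU eps He. exists U. split; [auto | split; [auto |]].
  eapply outer_le_mono; [| apply outer_le_empty; lra]. intros x y [H1 H2]; auto.
Qed.

Lemma meas_empty : measurable2 (fun _ _ => False).
Proof. apply meas_open. intros x y []. Qed.

Lemma meas_cond (P : Prop) (A : set2) : measurable2 A -> measurable2 (fun x y => P /\ A x y).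
Proof.
  intros HA. destruct (classic P) as [p | np].
  - eapply meas_ext; [| exact HA]. intros; tauto.
  - eapply meas_ext; [| exact meas_empty]. intros; tauto.
Qed.

Lemma meas_Union (A : nat -> set2) :
  (forall n, measurable2 (A n)) -> measurable2 (fun x y => exists n, A n x y).
Proof.
  intros HA eps He.
  assert (Hc : forall n, exists U, open2 U /\ (forall x y, A n x y -> U x y) /\
     outer_le (fun x y => U x y /\ ~ A n x y) (eps / 2 ^ S n)).
  { intros n. apply HA. apply Rdiv_lt_0_compat; [lra | apply pow_lt; lra]. }
  apply functional_choice in Hc. destruct Hc as [U Hc].
  exists (fun x y => exists n, U n x y). split; [| split].
  - intros x y [n Hn]. destruct (proj1 (Hc n) x y Hn) as [r [Hr Hb]].
    exists r; split; auto. intros; exists n; auto.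
  - intros x y [n Hn]. exists n. apply (proj1 (proj2 (Hc n))); auto.
  - eapply outer_le_mono.
    2: { apply (outer_le_Union (fun n x y => U n x y /\ ~ A n x y) (fun n => eps / 2 ^ S n)).
         - intros n; apply Hc.
         - intros M; apply rsum_geom; lra. }
    intros x y [[n Hn] Hna]. exists n. split; auto. intros Ha. apply Hna. exists n; auto.
Qed.

Lemma meas_union2 A B :
  measurable2 A -> measurable2 B -> measurable2 (fun x y => A x y \/ B x y).
Proof.
  intros HA HB. eapply meas_ext.
  2: { apply (meas_Union (fun n => match n with 0 => A | 1 => B | _ => fun _ _ => False end)).
       intros [|[|n]]; auto. apply meas_empty. }
  intros x y; split.
  - intros [[|[|n]] H]; tauto.
  - intros [H | H]; [exists O | exists 1%nat]; exact H.
Qed.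

Lemma meas_UnionZ (A : Z -> set2) :
  (forall z, measurable2 (A z)) -> measurable2 (fun x y => exists z, A z x y).
Proof.
  intros H. eapply meas_ext.
  2: { apply (meas_Union (fun n x y => A (Z.of_nat n) x y \/ A (- Z.of_nat n)%Z x y)).
       intros n; apply meas_union2; auto. }
  intros x y; split.
  - intros [n [Hn | Hn]]; eexists; eauto.
  - intros [z Hz]. destruct (Z.le_gt_cases 0 z).
    + exists (Z.to_nat z). left. rewrite Z2Nat.id; auto.
    + exists (Z.to_nat (- z)). right. rewrite Z2Nat.id, Z.opp_involutive; auto. lia.
Qed.

Lemma open2_inter U V : open2 U -> open2 V -> open2 (fun x y => U x y /\ V x y).
Proof.
  intros HU HV x y [Hu Hv].
  destruct (HU x y Hu) as [r1 [Hr1 H1]]. destruct (HV x y Hv) as [r2 [Hr2 H2]].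
  exists (Rmin r1 r2). split; [apply Rmin_pos; auto |].
  intros x' y' Hd. pose proof (Rmin_l r1 r2). pose proof (Rmin_r r1 r2).
  assert (0 < Rmin r1 r2) by (apply Rmin_pos; auto).
  split; [apply H1 | apply H2]; nra.
Qed.

Lemma meas_inter2 A B :
  measurable2 A -> measurable2 B -> measurable2 (fun x y => A x y /\ B x y).
Proof.
  intros HA HB eps He.
  destruct (HA (eps / 2)) as [U [HU [HAU Hl1]]]; [lra |].
  destruct (HB (eps / 2)) as [V [HV [HBV Hl2]]]; [lra |].
  exists (fun x y => U x y /\ V x y). split; [apply open2_inter; auto | split].
  - intros x y [Ha Hb]; split; auto.
  - replace eps with (eps / 2 + eps / 2) by field.
    eapply outer_le_mono; [| apply (outer_le_union2 _ _ _ _ Hl1 Hl2)].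
    intros x y [[Hu Hv] Hn]. destruct (classic (A x y)) as [Ha | Ha].
    + right; split; auto.
    + left; split; auto.
Qed.

Lemma meas_shift (A : set2) a b :
  measurable2 A -> measurable2 (fun x y => A (x + a) (y + b)).
Proof.
  intros HA eps He. destruct (HA eps He) as [U [HU [HAU Hl]]].
  exists (fun x y => U (x + a) (y + b)). split; [| split].
  - intros x y Hu. destruct (HU _ _ Hu) as [r [Hr H]]. exists r; split; auto.
    intros x' y' Hd. apply H.
    replace (x' + a - (x + a)) with (x' - x) by ring.
    replace (y' + b - (y + b)) with (y' - y) by ring. auto.
  - intros; auto.
  - apply (outer_le_shift (fun x y => U x y /\ ~ A x y)); auto.
Qed.

Lemma abs_lt_of_sq a r : 0 <= r -> a ^ 2 < r ^ 2 -> Rabs a < r.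
Proof.
  intros Hr H. apply Rnot_le_lt. intros Hc. rewrite <- (pow2_abs a) in H. nra.
Qed.

Lemma open_box a1 b1 a2 b2 : open2 (fun u v => a1 < u < b1 /\ a2 < v < b2).
Proof.
  intros x y H.
  set (r := Rmin (Rmin (x - a1) (b1 - x)) (Rmin (y - a2) (b2 - y))).
  assert (Hp : 0 < r) by (repeat apply Rmin_pos; lra).
  exists r. split; auto. intros x' y' Hd.
  assert (r <= x - a1 /\ r <= b1 - x /\ r <= y - a2 /\ r <= b2 - y) as [? [? [? ?]]].
  { unfold r, Rmin; repeat destruct Rle_dec; lra. }
  pose proof (pow2_ge_0 (x' - x)). pose proof (pow2_ge_0 (y' - y)).
  assert (Rabs (x' - x) < r) by (apply abs_lt_of_sq; lra).
  assert (Rabs (y' - y) < r) by (apply abs_lt_of_sq; lra).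
  unfold Rabs in *; repeat destruct Rcase_abs; lra.
Qed.

(* A closed rectangle is measurable: the open rectangle enlarged by t exceeds it
   by four thin strips of total area 2t(L1 + L2 + 4t). *)
Lemma meas_rect r : measurable2 (in_rect r).
Proof.
  destruct r as [a1 b1 a2 b2]. unfold in_rect; simpl.
  destruct (Rle_lt_dec a1 b1) as [H1 | H1]; [destruct (Rle_lt_dec a2 b2) as [H2 | H2] |];
    [| eapply meas_ext; [| exact meas_empty]; intros; lra ..].
  intros eps He.
  set (t := Rmin 1 (eps / (2 * (b1 - a1 + b2 - a2 + 4)))).
  assert (Ht : 0 < t) by (apply Rmin_pos; [lra | apply Rdiv_lt_0_compat; lra]).
  assert (Ht1 : t <= 1) by apply Rmin_l.
  assert (Ht2 : t * (2 * (b1 - a1 + b2 - a2 + 4)) <= eps).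
  { pose proof (Rmin_r 1 (eps / (2 * (b1 - a1 + b2 - a2 + 4)))) as Hm. fold t in Hm.
    apply (Rmult_le_compat_r (2 * (b1 - a1 + b2 - a2 + 4))) in Hm; [| lra].
    unfold Rdiv in Hm. rewrite Rmult_assoc, Rinv_l, Rmult_1_r in Hm; lra. }
  exists (fun u v => a1 - t < u < b1 + t /\ a2 - t < v < b2 + t).
  split; [apply open_box | split; [intros; lra |]].
  set (strip := fun k => match k with
                  | 0 => Rect (a1 - t) a1 (a2 - t) (b2 + t)
                  | 1 => Rect b1 (b1 + t) (a2 - t) (b2 + t)
                  | 2 => Rect (a1 - t) (b1 + t) (a2 - t) a2
                  | _ => Rect (a1 - t) (b1 + t) b2 (b2 + t) end).
  eapply outer_le_weaken; [apply (outer_le_finite _ strip 4) |].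
  - intros x y [Hu Hn]. unfold in_rect, strip; simpl.
    destruct (Rlt_le_dec x a1); [exists 0%nat; split; [lia | simpl; lra] |].
    destruct (Rlt_le_dec b1 x); [exists 1%nat; split; [lia | simpl; lra] |].
    destruct (Rlt_le_dec y a2); [exists 2%nat; split; [lia | simpl; lra] |].
    exists 3%nat; split; [lia | simpl]. nra.
  - unfold strip, area; simpl. rewrite !Rmax_right by lra. nra.
Qed.


Lemma Cnorm_ge0 z : 0 <= Cnorm z.
Proof. apply sqrt_pos. Qed.

Lemma Cnorm_sq z : Cnorm z ^ 2 = fst z ^ 2 + snd z ^ 2.
Proof.
  unfold Cnorm. rewrite pow2_sqrt; auto.
  pose proof (pow2_ge_0 (fst z)); pose proof (pow2_ge_0 (snd z)); lra.
Qed.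

Lemma le_of_sq a b : 0 <= b -> a ^ 2 <= b ^ 2 -> a <= b.
Proof. intros Hb H. apply Rnot_lt_le. intros Hl. nra. Qed.

Lemma abs_le_of_sq x y : 0 <= y -> x ^ 2 <= y ^ 2 -> Rabs x <= y.
Proof. intros Hy H. apply le_of_sq; auto. rewrite pow2_abs. auto. Qed.

Lemma Cnorm_le_abs z : Cnorm z <= Rabs (fst z) + Rabs (snd z).
Proof.
  pose proof (Rabs_pos (fst z)); pose proof (Rabs_pos (snd z)).
  apply le_of_sq; [lra |]. rewrite Cnorm_sq, <- (pow2_abs (fst z)), <- (pow2_abs (snd z)). nra.
Qed.

Lemma Cnorm_cauchy a b c d : a * c + b * d <= Cnorm (a, b) * Cnorm (c, d).
Proof.
  pose proof (Cnorm_ge0 (a, b)); pose proof (Cnorm_ge0 (c, d)).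
  destruct (Rle_lt_dec (a * c + b * d) 0); [nra |].
  apply le_of_sq; [nra |]. rewrite Rpow_mult_distr, !Cnorm_sq. simpl.
  pose proof (pow2_ge_0 (a * d - b * c)). nra.
Qed.

Lemma Cnorm_triangle u1 u2 v1 v2 : Cnorm (u1 + v1, u2 + v2) <= Cnorm (u1, u2) + Cnorm (v1, v2).
Proof.
  pose proof (Cnorm_ge0 (u1, u2)); pose proof (Cnorm_ge0 (v1, v2)).
  pose proof (Cnorm_cauchy u1 u2 v1 v2). pose proof (Cnorm_sq (u1, u2)). pose proof (Cnorm_sq (v1, v2)).
  apply le_of_sq; [lra |]. rewrite Cnorm_sq. simpl in *. nra.
Qed.

Lemma Cnorm_close p q : Cnorm p <= Cnorm q + Rabs (fst p - fst q) + Rabs (snd p - snd q).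
Proof.
  destruct p as [p1 p2], q as [q1 q2]. simpl.
  pose proof (Cnorm_triangle q1 q2 (p1 - q1) (p2 - q2)) as H.
  replace (q1 + (p1 - q1)) with p1 in H by ring. replace (q2 + (p2 - q2)) with p2 in H by ring.
  pose proof (Cnorm_le_abs (p1 - q1, p2 - q2)). simpl in *. lra.
Qed.

(* Measurability of the set where an increment of G exceeds delta: it is the
   countable union, over the grids of mesh 1/n, of the preimages of pairs of
   small open squares all of whose points are more than delta apart. *)

Definition grid_square (n : nat) (a b : Z) : set2 := fun u v =>
  IZR a / INR n - 2 / INR n < u < IZR a / INR n + 2 / INR n /\
  IZR b / INR n - 2 / INR n < v < IZR b / INR n + 2 / INR n.

Lemma grid_point_near M t : 0 < M -> exists a : Z, Rabs (IZR a / M - t) <= 1 / M.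
Proof.
  intros HM. destruct (archimed (M * t)) as [H1 H2]. exists (up (M * t)).
  rewrite Rabs_right.
  - apply (Rmult_le_reg_r M); auto. unfold Rdiv.
    rewrite Rmult_minus_distr_r, !Rmult_assoc, Rinv_l, !Rmult_1_r by lra. lra.
  - apply Rle_ge. apply (Rmult_le_reg_r M); auto. unfold Rdiv.
    rewrite Rmult_minus_distr_r, !Rmult_assoc, Rinv_l, !Rmult_1_r by lra. lra.
Qed.

Lemma separated_grid_squares (w u : Cpx) delta : Cnorm (Csub w u) > delta ->
  exists n a b c d,
    (forall w1 w2 u1 u2, grid_square n a b w1 w2 -> grid_square n c d u1 u2 ->
       Cnorm (Csub (w1, w2) (u1, u2)) > delta) /\
    grid_square n a b (fst w) (snd w) /\ grid_square n c d (fst u) (snd u).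
Proof.
  intros Hgt. set (r := Cnorm (Csub w u) - delta).
  destruct (exists_nat_above (12 / r)) as [n [Hn0 Hn]].
  set (M := INR n) in *. assert (HM : 0 < M) by (apply lt_0_INR; lia).
  assert (HMr : 12 / M < r).
  { apply (Rmult_lt_reg_r (M / r)); [apply Rdiv_lt_0_compat; unfold r; lra |].
    replace (12 / M * (M / r)) with (12 / r) by (field; unfold r; lra).
    replace (r * (M / r)) with M by (field; unfold r; lra). lra. }
  assert (Hsq : forall t a, Rabs (IZR a / M - t) <= 1 / M ->
     IZR a / M - 2 / M < t < IZR a / M + 2 / M /\
     forall s, IZR a / M - 2 / M < s < IZR a / M + 2 / M -> Rabs (s - t) < 3 / M).
  { intros t a Ha. replace (2 / M) with (2 * (1 / M)) by (field; lra).
    replace (3 / M) with (3 * (1 / M)) by (field; lra).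
    assert (He : 0 < 1 / M) by (apply Rdiv_lt_0_compat; lra).
    revert He Ha. generalize (1 / M) (IZR a / M). intros e A He Ha.
    unfold Rabs in *; split; [| intros s Hs]; repeat destruct Rcase_abs; lra. }
  destruct (grid_point_near M (fst w) HM) as [a Ha]. destruct (grid_point_near M (snd w) HM) as [b Hb].
  destruct (grid_point_near M (fst u) HM) as [c Hc]. destruct (grid_point_near M (snd u) HM) as [d Hd].
  destruct (Hsq _ _ Ha) as [Ha1 Ha2]. destruct (Hsq _ _ Hb) as [Hb1 Hb2].
  destruct (Hsq _ _ Hc) as [Hc1 Hc2]. destruct (Hsq _ _ Hd) as [Hd1 Hd2].
  exists n, a, b, c, d. split; [| split; split; auto].
  intros w1 w2 u1 u2 [H1 H2] [H3 H4].
  specialize (Ha2 _ H1). specialize (Hb2 _ H2). specialize (Hc2 _ H3). specialize (Hd2 _ H4).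
  pose proof (Cnorm_close (Csub w u) (Csub (w1, w2) (u1, u2))) as Hcl.
  unfold r in HMr. unfold Csub in *; simpl fst in *; simpl snd in *.
  apply Rabs_def2 in Ha2, Hb2, Hc2, Hd2.
  assert (E1 : Rabs (fst w - fst u - (w1 - u1)) < 6 / M).
  { apply Rabs_def1; replace (6 / M) with (2 * (3 / M)) by (field; lra); lra. }
  assert (E2 : Rabs (snd w - snd u - (w2 - u2)) < 6 / M).
  { apply Rabs_def1; replace (6 / M) with (2 * (3 / M)) by (field; lra); lra. }
  replace (12 / M) with (6 / M + 6 / M) in HMr by (field; lra). lra.
Qed.

Lemma meas_increment (G : R -> R -> Cpx) h k delta : measurable_fun G ->
  measurable2 (fun x y => Cnorm (Csub (G (x + h) (y + k)) (G x y)) > delta).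
Proof.
  intros HG. eapply meas_ext.
  2: { apply (meas_Union (fun n x y => exists a b c d,
         (forall w1 w2 u1 u2, grid_square n a b w1 w2 -> grid_square n c d u1 u2 ->
            Cnorm (Csub (w1, w2) (u1, u2)) > delta) /\
         (grid_square n a b (fst (G (x + h) (y + k))) (snd (G (x + h) (y + k))) /\
          grid_square n c d (fst (G x y)) (snd (G x y))))).
       intros n. apply meas_UnionZ; intros a. apply meas_UnionZ; intros b.
       apply meas_UnionZ; intros c. apply meas_UnionZ; intros d.
       apply meas_cond, meas_inter2.
       - apply (meas_shift (fun x y => grid_square n a b (fst (G x y)) (snd (G x y)))).
         apply HG, open_box.
       - apply HG, open_box. }
  intros x y. split.
  - intros [n [a [b [c [d [HP [H1 H2]]]]]]]. specialize (HP _ _ _ _ H1 H2).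
    destruct (G (x + h) (y + k)), (G x y). exact HP.
  - intros Hgt. destruct (separated_grid_squares _ _ _ Hgt) as [n [a [b [c [d H]]]]].
    exists n, a, b, c, d. exact H.
Qed.


(* A countable cover
   is first made open (enlarging each rectangle slightly), then finite
   (Heine-Borel), and a finite cover is compared with the area by counting
   the points of a fine grid. *)

Definition ind (al be t : R) : R := if Rle_dec al t then if Rle_dec t be then 1 else 0 else 0.

Lemma ind_ge0 al be t : 0 <= ind al be t.
Proof. unfold ind; repeat destruct Rle_dec; lra. Qed.

Lemma ind_1 al be t : al <= t <= be -> ind al be t = 1.
Proof. unfold ind; repeat destruct Rle_dec; lra. Qed.

Lemma count_midpoints al be a h M : 0 < h ->
  rsum (fun i => ind al be (a + (INR i + /2) * h)) M <= Rmax 0 (be - al) / h + 1.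
Proof.
  intros Hh. assert (Hdiv : forall u v, u <= v -> u / h <= v / h).
  { intros u v Huv. unfold Rdiv. apply Rmult_le_compat_r; [left; apply Rinv_0_lt_compat |]; lra. }
  (* Invariant: the count so far is bounded using the last midpoint visited. *)
  assert (Hc : rsum (fun i => ind al be (a + (INR i + /2) * h)) M <=
               Rmax 0 ((Rmin be (a + (INR M - /2) * h) - al) / h + 1)).
  { induction M; [simpl; apply Rmax_l |].
    cbn [rsum]. rewrite S_INR.
    replace (a + (INR M + 1 - / 2) * h) with (a + (INR M + / 2) * h) by field.
    set (t := a + (INR M + / 2) * h) in *.
    assert (Hstep : (a + (INR M - / 2) * h - al) / h + 1 = (t - al) / h)
      by (unfold t; field; lra).
    unfold ind at 2. destruct (Rle_dec al t) as [H1 | H1]; [destruct (Rle_dec t be) as [H2 | H2] |].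
    - rewrite (Rmin_right be) by lra.
      assert (Rmax 0 ((Rmin be (a + (INR M - / 2) * h) - al) / h + 1) <= (t - al) / h).
      { apply Rmax_lub; [apply Rmult_le_pos; [lra | left; apply Rinv_0_lt_compat; lra] |].
        rewrite <- Hstep. apply Rplus_le_compat_r, Hdiv.
        pose proof (Rmin_r be (a + (INR M - / 2) * h)). lra. }
      rewrite Rmax_right; [lra |].
      assert (0 <= (t - al) / h) by (apply Rmult_le_pos; [lra | left; apply Rinv_0_lt_compat; lra]).
      lra.
    - rewrite Rplus_0_r. eapply Rle_trans; [apply IHM |]. apply Rle_max_compat_l.
      apply Rplus_le_compat_r, Hdiv. apply Rplus_le_compat_r.
      unfold t in *. unfold Rmin. repeat destruct Rle_dec; lra.
    - rewrite Rplus_0_r. eapply Rle_trans; [apply IHM |]. apply Rle_max_compat_l.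
      apply Rplus_le_compat_r, Hdiv. apply Rplus_le_compat_r.
      unfold t in *. unfold Rmin. repeat destruct Rle_dec; lra. }
  eapply Rle_trans; [exact Hc |]. apply Rmax_lub.
  - assert (0 <= Rmax 0 (be - al) / h)
      by (apply Rmult_le_pos; [apply Rmax_l | left; apply Rinv_0_lt_compat; lra]).
    lra.
  - apply Rplus_le_compat_r, Hdiv. pose proof (Rmin_l be (a + (INR M - / 2) * h)).
    pose proof (Rmax_r 0 (be - al)). lra.
Qed.

Lemma midpoint_in_interval (i M : nat) a b : (i < M)%nat -> a <= b ->
  a <= a + (INR i + /2) * ((b - a) / INR M) <= b.
Proof.
  intros Hi Hab. assert (HM : 0 < INR M) by (apply lt_0_INR; lia).
  assert (INR i + 1 <= INR M) by (rewrite <- S_INR; apply le_INR; lia).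
  pose proof (pos_INR i).
  assert (0 <= (b - a) / INR M) by (apply Rmult_le_pos; [lra | left; apply Rinv_0_lt_compat; lra]).
  split; [nra |].
  assert ((INR i + /2) * ((b - a) / INR M) <= INR M * ((b - a) / INR M)) by nra.
  replace (INR M * ((b - a) / INR M)) with (b - a) in * by (field; lra). lra.
Qed.

Section FiniteCover.

Variables (a1 b1 a2 b2 : R) (d : nat -> rect) (n : nat).
Hypothesis (Hab1 : a1 < b1) (Hab2 : a2 < b2).
Hypothesis Hcov : forall x y, a1 <= x <= b1 -> a2 <= y <= b2 ->
  exists k, (k < n)%nat /\ in_rect (d k) x y.

Let L1 k := Rmax 0 (rb1 (d k) - ra1 (d k)).
Let L2 k := Rmax 0 (rb2 (d k) - ra2 (d k)).

(* Each of the M^2 midpoints of the M x M grid of the box lies in some d_k,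
   and d_k contains at most (L1 k / h1 + 1) (L2 k / h2 + 1) of them. *)
Lemma grid_points_in_cover M : (0 < M)%nat ->
  let h1 := (b1 - a1) / INR M in let h2 := (b2 - a2) / INR M in
  INR M * INR M <= rsum (fun k => (L1 k / h1 + 1) * (L2 k / h2 + 1)) n.
Proof.
  intros HM h1 h2. assert (HM0 : 0 < INR M) by (apply lt_0_INR; lia).
  assert (Hh1 : 0 < h1) by (apply Rdiv_lt_0_compat; lra).
  assert (Hh2 : 0 < h2) by (apply Rdiv_lt_0_compat; lra).
  set (c1 := fun k i => ind (ra1 (d k)) (rb1 (d k)) (a1 + (INR i + /2) * h1)).
  set (c2 := fun k j => ind (ra2 (d k)) (rb2 (d k)) (a2 + (INR j + /2) * h2)).
  assert (Hpoint : forall i j, (i < M)%nat -> (j < M)%nat ->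
            1 <= rsum (fun k => c1 k i * c2 k j) n).
  { intros i j Hi Hj.
    destruct (Hcov _ _ (midpoint_in_interval i M a1 b1 Hi (Rlt_le _ _ Hab1))
                       (midpoint_in_interval j M a2 b2 Hj (Rlt_le _ _ Hab2))) as [k [Hk Hin]].
    eapply Rle_trans; [| apply (rsum_ge_term _ _ k); auto].
    - unfold c1, c2, in_rect in *. fold h1 h2 in Hin. rewrite !ind_1; lra.
    - intros; apply Rmult_le_pos; apply ind_ge0. }
  replace (INR M * INR M) with (rsum (fun i => rsum (fun j => 1) M) M)
    by (rewrite !rsum_const; ring).
  eapply Rle_trans.
  { apply rsum_le. intros i Hi. apply rsum_le. intros j Hj. apply (Hpoint i j Hi Hj). }
  rewrite (rsum_ext _ (fun i => rsum (fun k => rsum (fun j => c1 k i * c2 k j) M) n))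
    by (intros; apply rsum_swap).
  rewrite rsum_swap. apply rsum_le. intros k Hk.
  rewrite (rsum_ext _ (fun i => c1 k i * rsum (fun j => c2 k j) M)) by (intros; apply rsum_scal).
  rewrite rsum_mul_r.
  apply Rmult_le_compat; try (apply rsum_ge0; intros; apply ind_ge0); apply count_midpoints; auto.
Qed.

(* Multiplying by the cell area h1 h2 = area / M^2. *)
Lemma finite_cover_area_approx M : (0 < M)%nat ->
  (b1 - a1) * (b2 - a2) <= rsum (fun k => area (d k)) n +
    ((b1 - a1) * rsum L2 n + (b2 - a2) * rsum L1 n + INR n * ((b1 - a1) * (b2 - a2))) / INR M.
Proof.
  intros HM. pose proof (grid_points_in_cover M HM) as Hg. cbv zeta in Hg.
  assert (HM0 : 0 < INR M) by (apply lt_0_INR; lia).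
  assert (HM1 : 1 <= INR M) by (replace 1 with (INR 1) by reflexivity; apply le_INR; lia).
  set (h1 := (b1 - a1) / INR M) in *. set (h2 := (b2 - a2) / INR M) in *.
  assert (Hh : 0 < h1 * h2) by (apply Rmult_lt_0_compat; apply Rdiv_lt_0_compat; lra).
  apply (Rmult_le_compat_r (h1 * h2)) in Hg; [| lra].
  rewrite <- rsum_mul_r in Hg.
  rewrite (rsum_ext _ (fun k => area (d k) + h2 * L1 k + h1 * L2 k + h1 * h2)) in Hg
    by (intros; unfold area, L1, L2; field; unfold h1, h2; split; apply Rgt_not_eq, Rdiv_lt_0_compat; lra).
  rewrite !rsum_plus, !rsum_scal, rsum_const in Hg.
  replace (INR M * INR M * (h1 * h2)) with ((b1 - a1) * (b2 - a2)) in Hg by (unfold h1, h2; field; lra).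
  assert (Hn : INR n * (h1 * h2) <= INR n * ((b1 - a1) * (b2 - a2)) / INR M).
  { unfold h1, h2. replace (INR n * ((b1 - a1) / INR M * ((b2 - a2) / INR M)))
      with (INR n * ((b1 - a1) * (b2 - a2)) / INR M * / INR M) by (field; lra).
    pose proof (pos_INR n). assert (0 <= INR n * ((b1 - a1) * (b2 - a2)) / INR M)
      by (apply Rmult_le_pos; [apply Rmult_le_pos; [apply pos_INR | nra] | left; apply Rinv_0_lt_compat; lra]).
    assert (/ INR M <= 1) by (rewrite <- Rinv_1; apply Rinv_le_contravar; lra). nra. }
  replace (((b1 - a1) * rsum L2 n + (b2 - a2) * rsum L1 n + INR n * ((b1 - a1) * (b2 - a2))) / INR M)
    with (h2 * rsum L1 n + h1 * rsum L2 n + INR n * ((b1 - a1) * (b2 - a2)) / INR M)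
    by (unfold h1, h2; field; lra).
  lra.
Qed.

Lemma finite_cover_area : (b1 - a1) * (b2 - a2) <= rsum (fun k => area (d k)) n.
Proof.
  set (E := (b1 - a1) * rsum L2 n + (b2 - a2) * rsum L1 n + INR n * ((b1 - a1) * (b2 - a2))).
  apply Rnot_lt_le. intros Hgt.
  set (g := (b1 - a1) * (b2 - a2) - rsum (fun k => area (d k)) n).
  assert (Hg : 0 < g) by (unfold g; lra).
  destruct (exists_nat_above (E / g)) as [M [HM HEM]].
  pose proof (finite_cover_area_approx M HM) as Ha. fold E in Ha.
  assert (HM0 : 0 < INR M) by (apply lt_0_INR; lia).
  assert (E / INR M < g).
  { apply (Rmult_lt_reg_r (INR M / g)); [apply Rdiv_lt_0_compat; lra |].
    replace (E / INR M * (INR M / g)) with (E / g) by (field; lra).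
    replace (g * (INR M / g)) with (INR M) by (field; lra). lra. }
  unfold g in *. lra.
Qed.

End FiniteCover.


Lemma compact_interval_cover (a b : R) (F : R -> R -> Prop) :
  (forall t, open_set (F t)) -> (forall y, a <= y <= b -> exists t, F t y) ->
  exists l : list R, forall y, a <= y <= b -> exists t, In t l /\ F t y.
Proof.
  intros Ho Hc.
  set (fam := mkfamily (fun t => exists y, F t y) F (fun t H => H)).
  destruct (compact_P3 a b fam) as [D [Hcov [l Hl]]].
  { split; [intros y Hy; apply Hc, Hy | intros t; apply Ho]. }
  exists l. intros y Hy. destruct (Hcov y Hy) as [t [Ht HD]].
  exists t. split; auto. apply Hl. split; auto. exists y; auto.
Qed.

Lemma list_bound (l : list R) : exists N : nat, forall t, In t l -> t < INR N.
Proof.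
  induction l as [|a l [N HN]]; [exists O; intros t [] |].
  destruct (exists_nat_above a) as [m [_ Hm]]. exists (N + m)%nat.
  pose proof (pos_INR N); pose proof (pos_INR m).
  intros t [<- | Ht]; rewrite plus_INR; [lra | specialize (HN t Ht); lra].
Qed.

Lemma list_bound_nat (l : list R) (f : R -> nat) : exists N, forall t, In t l -> (f t <= N)%nat.
Proof.
  induction l as [|a l [N HN]]; [exists O; intros t [] |].
  exists (Nat.max (f a) N). intros t [<- | Ht]; [lia | specialize (HN t Ht); lia].
Qed.

Lemma open_set_interval (lo hi : R) : open_set (fun y => lo < y < hi).
Proof.
  intros y Hy. assert (Hp : 0 < Rmin (y - lo) (hi - y)) by (apply Rmin_pos; lra).
  exists (mkposreal _ Hp). intros z Hz. unfold disc in Hz; simpl in Hz.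
  pose proof (Rmin_l (y - lo) (hi - y)). pose proof (Rmin_r (y - lo) (hi - y)).
  apply Rabs_def2 in Hz. lra.
Qed.

Lemma open_set_ext (A B : R -> Prop) : (forall y, A y <-> B y) -> open_set A -> open_set B.
Proof.
  intros H HA y Hy. destruct (HA y (proj2 (H y) Hy)) as [d Hd].
  exists d. intros z Hz. apply H, Hd, Hz.
Qed.

Lemma common_radius (p q : nat -> R) x N : exists rho, 0 < rho /\
  forall k, (k < N)%nat -> p k < x < q k -> forall x', Rabs (x' - x) < rho -> p k < x' < q k.
Proof.
  induction N as [|N [rho [Hr H]]]; [exists 1; split; [lra | intros; lia] |].
  destruct (classic (p N < x < q N)) as [Hin | Hout].
  - exists (Rmin rho (Rmin (x - p N) (q N - x))). split; [repeat apply Rmin_pos; lra |].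
    intros k Hk Hk2 x' Hx'.
    pose proof (Rmin_l rho (Rmin (x - p N) (q N - x))). pose proof (Rmin_r rho (Rmin (x - p N) (q N - x))).
    pose proof (Rmin_l (x - p N) (q N - x)). pose proof (Rmin_r (x - p N) (q N - x)).
    destruct (Nat.eq_dec k N) as [-> |]; [apply Rabs_def2 in Hx'; lra |].
    apply (H k); [lia | auto | lra].
  - exists rho. split; auto. intros k Hk Hk2 x' Hx'.
    destruct (Nat.eq_dec k N) as [-> |]; [contradiction |]. apply (H k); [lia | auto | auto].
Qed.

Section HeineBorel.

Variables (a1 b1 a2 b2 : R) (p q r s : nat -> R).
Hypothesis Hcov : forall x y, a1 <= x <= b1 -> a2 <= y <= b2 ->
  exists k, p k < x < q k /\ r k < y < s k.

Lemma strip_cover x : a1 <= x <= b1 -> exists (N : nat) (rho : R), 0 < rho /\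
  forall x', Rabs (x' - x) < rho -> forall y, a2 <= y <= b2 ->
    exists k, (k < N)%nat /\ p k < x' < q k /\ r k < y < s k.
Proof.
  intros Hx.
  destruct (compact_interval_cover a2 b2
              (fun t y => exists k, t = INR k /\ p k < x < q k /\ r k < y < s k)) as [l Hl].
  - intros t. destruct (classic (exists k, t = INR k /\ p k < x < q k)) as [[k [-> Hk]] | Hn].
    + apply (open_set_ext (fun y => r k < y < s k)); [| apply open_set_interval].
      intros y; split; [intros Hy; exists k; auto |].
      intros [k' [Hk' [_ Hy]]]. apply INR_eq in Hk'. subst. auto.
    + apply (open_set_ext (fun _ => False)); [| intros y []].
      intros y; split; [intros [] |]. intros [k [? [? ?]]]. apply Hn. exists k; auto.
  - intros y Hy. destruct (Hcov x y Hx Hy) as [k Hk]. exists (INR k), k. auto.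
  - destruct (list_bound l) as [N HN]. destruct (common_radius p q x N) as [rho [Hr Hrho]].
    exists N, rho. split; auto. intros x' Hx' y Hy.
    destruct (Hl y Hy) as [t [Ht [k [-> [Hk1 Hk2]]]]].
    specialize (HN _ Ht). apply INR_lt in HN.
    exists k. split; [auto | split; [apply (Hrho k) | ]]; auto.
Qed.

Lemma heine_borel_box : exists n, forall x y, a1 <= x <= b1 -> a2 <= y <= b2 ->
  exists k, (k < n)%nat /\ p k < x < q k /\ r k < y < s k.
Proof.
  assert (Hstrip : forall x, exists Nr : nat * R, a1 <= x <= b1 -> 0 < snd Nr /\
     forall x', Rabs (x' - x) < snd Nr -> forall y, a2 <= y <= b2 ->
        exists k, (k < fst Nr)%nat /\ p k < x' < q k /\ r k < y < s k).
  { intros x. destruct (classic (a1 <= x <= b1)) as [Hx | Hx]; [| exists (O, 1); tauto].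
    destruct (strip_cover x Hx) as [N [rho H]]. exists (N, rho). auto. }
  apply functional_choice in Hstrip. destruct Hstrip as [fN HfN].
  destruct (compact_interval_cover a1 b1
              (fun t x => (a1 <= t <= b1) /\ Rabs (x - t) < snd (fN t))) as [l Hl].
  - intros t. destruct (classic (a1 <= t <= b1)) as [Ht | Ht].
    + apply (open_set_ext (fun x => t - snd (fN t) < x < t + snd (fN t))); [| apply open_set_interval].
      intros x; split.
      * intros; split; auto. apply Rabs_def1; lra.
      * intros [_ H]. apply Rabs_def2 in H. lra.
    + apply (open_set_ext (fun _ => False)); [| intros y []]. intros; tauto.
  - intros x Hx. exists x. split; auto. rewrite Rminus_diag, Rabs_R0. apply (HfN x Hx).
  - destruct (list_bound_nat l (fun t => fst (fN t))) as [N HN]. exists N.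
    intros x y Hx Hy. destruct (Hl x Hx) as [t [Ht [Ht1 Ht2]]].
    destruct (proj2 (HfN t Ht1) x Ht2 y Hy) as [k [Hk1 Hk2]].
    exists k. split; auto. specialize (HN t Ht). lia.
Qed.

End HeineBorel.

Lemma enlarge_area L1 L2 e : 0 <= L1 -> 0 <= L2 -> 0 < e -> exists eta, 0 < eta /\
  Rmax 0 (L1 + 2 * eta) * Rmax 0 (L2 + 2 * eta) <= L1 * L2 + e.
Proof.
  intros H1 H2 He. set (eta := Rmin 1 (e / (2 * L1 + 2 * L2 + 4))).
  assert (Hp : 0 < e / (2 * L1 + 2 * L2 + 4)) by (apply Rdiv_lt_0_compat; lra).
  assert (Heta : 0 < eta) by (apply Rmin_pos; lra).
  assert (eta <= 1) by apply Rmin_l.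
  assert (Hb : eta <= e / (2 * L1 + 2 * L2 + 4)) by apply Rmin_r.
  apply (Rmult_le_compat_r (2 * L1 + 2 * L2 + 4)) in Hb; [| lra].
  replace (e / (2 * L1 + 2 * L2 + 4) * (2 * L1 + 2 * L2 + 4)) with e in Hb by (field; lra).
  exists eta. split; auto. rewrite !Rmax_right by lra. nra.
Qed.

Lemma outer_le_box_area a1 b1 a2 b2 w : a1 <= b1 -> a2 <= b2 ->
  outer_le (fun x y => a1 <= x <= b1 /\ a2 <= y <= b2) w -> (b1 - a1) * (b2 - a2) <= w.
Proof.
  intros H1 H2 Hw. pose proof (outer_le_ge0 _ _ Hw) as Hw0.
  destruct (Req_dec a1 b1) as [<- | E1]; [lra |].
  destruct (Req_dec a2 b2) as [<- | E2]; [lra |].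
  apply Rnot_lt_le. intros Hgt. set (g := (b1 - a1) * (b2 - a2) - w).
  destruct (Hw (g / 3)) as [c [Hc Hs]]; [unfold g; lra |].
  set (L1 := fun k => Rmax 0 (rb1 (c k) - ra1 (c k))).
  set (L2 := fun k => Rmax 0 (rb2 (c k) - ra2 (c k))).
  assert (Heta : forall k, exists eta, 0 < eta /\
     Rmax 0 (L1 k + 2 * eta) * Rmax 0 (L2 k + 2 * eta) <= L1 k * L2 k + g / 3 / 2 ^ S k).
  { intros k. apply enlarge_area; try apply Rmax_l.
    apply Rdiv_lt_0_compat; [unfold g; lra | apply pow_lt; lra]. }
  apply functional_choice in Heta. destruct Heta as [eta Heta].
  set (d := fun k => Rect (ra1 (c k) - eta k) (rb1 (c k) + eta k)
                          (ra2 (c k) - eta k) (rb2 (c k) + eta k)).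
  destruct (heine_borel_box a1 b1 a2 b2 (fun k => ra1 (d k)) (fun k => rb1 (d k))
              (fun k => ra2 (d k)) (fun k => rb2 (d k))) as [n Hn].
  { intros x y Hx Hy. destruct (Hc x y (conj Hx Hy)) as [k Hk]. exists k.
    unfold in_rect in Hk. destruct (Heta k) as [Hk1 _]. simpl. lra. }
  assert (Hfin : (b1 - a1) * (b2 - a2) <= rsum (fun k => area (d k)) n).
  { apply finite_cover_area; try lra. intros x y Hx Hy. destruct (Hn x y Hx Hy) as [k [Hk Hin]].
    exists k. split; auto. unfold in_rect; lra. }
  assert (Hd : rsum (fun k => area (d k)) n <= rsum (fun k => area (c k)) n + g / 3).
  { eapply Rle_trans; [apply (rsum_le _ (fun k => area (c k) + g / 3 / 2 ^ S k)) |].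
    - intros k _. unfold area, d; simpl. destruct (Heta k) as [Hk1 Hk2].
      eapply Rle_trans; [| exact Hk2]. unfold L1, L2.
      assert (Hm : forall u v, u <= v -> Rmax 0 u <= Rmax 0 v)
        by (intros; unfold Rmax; repeat destruct Rle_dec; lra).
      apply Rmult_le_compat; try apply Rmax_l; apply Hm; unfold Rmax; destruct Rle_dec; lra.
    - rewrite rsum_plus. pose proof (rsum_geom (g / 3) n). unfold g in *. lra. }
  destruct n as [|n]; [destruct (Hn a1 a2) as [k [Hk _]]; lra || lia |].
  specialize (Hs n). rewrite sum_f_R0_rsum in Hs. unfold g in *. lra.
Qed.


(* For z, w we use conj(z) w, whose
   argument is the angle from z to w; when its real part is positive this angle
   is atan (Im / Re), a number in (-pi/2, pi/2). *)

Definition Cconj (z : Cpx) : Cpx := (fst z, - snd z).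
Definition Cscale (r : R) (z : Cpx) : Cpx := (r * fst z, r * snd z).
Definition Cconj_mul (z w : Cpx) : Cpx := Cmul (Cconj z) w.
Definition rel_angle (z w : Cpx) : R := atan (snd (Cconj_mul z w) / fst (Cconj_mul z w)).

Definition is_angle (t : R) (z w : Cpx) : Prop :=
  Cscale (Cnorm z * Cnorm w) (Cexpi t) = Cconj_mul z w.

Lemma Cexpi_add x y : Cmul (Cexpi x) (Cexpi y) = Cexpi (x + y).
Proof. unfold Cexpi, Cmul; simpl. rewrite cos_plus, sin_plus. f_equal; ring. Qed.

Lemma Cexpi_sub x y : Cmul (Cexpi x) (Cconj (Cexpi y)) = Cexpi (x - y).
Proof. unfold Cexpi, Cconj, Cmul; simpl. rewrite cos_minus, sin_minus. f_equal; ring. Qed.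

Lemma Cnorm_conj_mul z w : Cnorm (Cconj_mul z w) = Cnorm z * Cnorm w.
Proof.
  unfold Cnorm. rewrite <- sqrt_mult.
  - f_equal. unfold Cconj_mul, Cmul, Cconj; simpl; ring.
  - pose proof (pow2_ge_0 (fst z)); pose proof (pow2_ge_0 (snd z)); lra.
  - pose proof (pow2_ge_0 (fst w)); pose proof (pow2_ge_0 (snd w)); lra.
Qed.

Lemma Cnorm_rot al z : Cnorm (Cmul (Cexpi al) z) = Cnorm z.
Proof.
  unfold Cnorm, Cmul, Cexpi; cbn [fst snd]. f_equal. pose proof (sin2_cos2 al) as H. unfold Rsqr in H.
  replace ((cos al * fst z - sin al * snd z) ^ 2 + (cos al * snd z + sin al * fst z) ^ 2)
    with ((sin al * sin al + cos al * cos al) * (fst z ^ 2 + snd z ^ 2)) by ring.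
  rewrite H. ring.
Qed.

Lemma atan_polar a b : 0 < a ->
  cos (atan (b / a)) * Cnorm (a, b) = a /\ sin (atan (b / a)) * Cnorm (a, b) = b.
Proof.
  intros Ha. rewrite cos_atan, sin_atan.
  assert (Hs : 0 < sqrt (1 + (b / a)²)) by (apply sqrt_lt_R0; pose proof (Rle_0_sqr (b / a)); lra).
  assert (E : Cnorm (a, b) = a * sqrt (1 + (b / a)²)).
  { unfold Cnorm; cbn [fst snd].
    replace (a ^ 2 + b ^ 2) with ((a * a) * (1 + (b / a)²)) by (unfold Rsqr; field; lra).
    rewrite sqrt_mult, sqrt_square by (try nra; pose proof (Rle_0_sqr (b / a)); lra). reflexivity. }
  rewrite E. split; field; lra.
Qed.

Lemma rel_angle_is_angle z w : 0 < fst (Cconj_mul z w) -> is_angle (rel_angle z w) z w.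
Proof.
  intros H. unfold is_angle, rel_angle. rewrite <- Cnorm_conj_mul.
  destruct (Cconj_mul z w) as [a b]. simpl in H. destruct (atan_polar a b H) as [H1 H2].
  unfold Cscale, Cexpi; simpl. rewrite (Rmult_comm _ (cos _)), (Rmult_comm _ (sin _)), H1, H2.
  reflexivity.
Qed.

Lemma is_angle_rot t z w al be : is_angle t z w ->
  is_angle (be - al + t) (Cmul (Cexpi al) z) (Cmul (Cexpi be) w).
Proof.
  unfold is_angle. intros H. rewrite !Cnorm_rot.
  replace (Cconj_mul (Cmul (Cexpi al) z) (Cmul (Cexpi be) w))
    with (Cmul (Cexpi (be - al)) (Cconj_mul z w))
    by (destruct z, w; unfold Cconj_mul, Cconj, Cmul, Cexpi; simpl;
        rewrite cos_minus, sin_minus; f_equal; ring).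
  rewrite <- H, <- Cexpi_add. unfold Cscale, Cmul, Cexpi; simpl. f_equal; ring.
Qed.

Lemma atan_lt_pi4 t : Rabs t < 1 -> Rabs (atan t) < PI / 4.
Proof.
  intros H. rewrite <- atan_1. apply Rabs_def2 in H. apply Rabs_def1.
  - apply atan_increasing; lra.
  - rewrite <- atan_opp. apply atan_increasing; lra.
Qed.

Lemma rel_angle_small D z w : 0 < D -> D <= Cnorm z -> Cnorm (Csub w z) <= D / 10 ->
  0 < fst (Cconj_mul z w) /\ Rabs (rel_angle z w) < PI / 4.
Proof.
  intros HD Hz Hd. destruct z as [z1 z2], w as [w1 w2]. unfold Csub in Hd; simpl in Hd.
  set (d1 := w1 - z1) in *. set (d2 := w2 - z2) in *.
  replace w1 with (z1 + d1) by (unfold d1; ring). replace w2 with (z2 + d2) by (unfold d2; ring).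
  unfold rel_angle, Cconj_mul, Cconj, Cmul; simpl.
  pose proof (Cnorm_sq (z1, z2)) as Sz. pose proof (Cnorm_sq (d1, d2)) as Sd. cbn [fst snd] in Sz, Sd.
  set (nz := Cnorm (z1, z2)) in *. set (nd := Cnorm (d1, d2)) in *.
  assert (0 <= nd) by apply Cnorm_ge0.
  (* Cauchy-Schwarz for the real and imaginary parts of conj(z) d. *)
  assert (C1 : Rabs (z1 * d1 + z2 * d2) <= nz * nd).
  { apply abs_le_of_sq; [nra |]. rewrite Rpow_mult_distr, Sz, Sd.
    pose proof (pow2_ge_0 (z1 * d2 - z2 * d1)). nra. }
  assert (C2 : Rabs (z1 * d2 - z2 * d1) <= nz * nd).
  { apply abs_le_of_sq; [nra |]. rewrite Rpow_mult_distr, Sz, Sd.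
    pose proof (pow2_ge_0 (z1 * d1 + z2 * d2)). nra. }
  set (re := z1 * (z1 + d1) - - z2 * (z2 + d2)).
  set (im := z1 * (z2 + d2) + - z2 * (z1 + d1)).
  assert (Hre : nz * nz - nz * nd <= re).
  { pose proof (Rle_abs (- (z1 * d1 + z2 * d2))) as C3. rewrite Rabs_Ropp in C3.
    unfold re. nra. }
  assert (Him : Rabs im <= nz * nd) by (unfold im; replace (z1 * (z2 + d2) + - z2 * (z1 + d1))
    with (z1 * d2 - z2 * d1) by ring; exact C2).
  assert (Hpos : 0 < nz * nz - nz * nd) by nra.
  split; [lra |]. apply atan_lt_pi4.
  unfold Rdiv. rewrite Rabs_mult, Rabs_inv, (Rabs_right re) by lra.
  apply (Rmult_lt_reg_r re); [lra |]. rewrite Rmult_assoc, Rinv_l, Rmult_1_r by lra. nra.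
Qed.

Lemma cos_kpi_1 (k : Z) : Rabs (IZR k * PI) < 2 * PI -> cos (IZR k * PI) = 1 -> k = 0%Z.
Proof.
  intros H Hc. pose proof PI_RGT_0.
  assert (Hk : (-2 < k < 2)%Z).
  { rewrite Rabs_mult, (Rabs_right PI) in H by lra.
    assert (Rabs (IZR k) < 2) by nra. rewrite <- abs_IZR in H1. apply lt_IZR in H1. lia. }
  assert (Hk3 : (k = -1 \/ k = 0 \/ k = 1)%Z) by lia.
  destruct Hk3 as [-> | [-> | ->]]; auto.
  - replace (IZR (-1) * PI) with (- PI) in Hc by (simpl; ring). rewrite cos_neg, cos_PI in Hc. lra.
  - replace (IZR 1 * PI) with PI in Hc by (simpl; ring). rewrite cos_PI in Hc. lra.
Qed.

(* Around a cell a -> b -> c <- d <- a of nonzero numbers, the angles t1 (a to b),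
   t2 (b to c), t3 (d to c), t4 (a to d) satisfy t1 + t2 - t3 - t4 in 2 pi Z,
   since the product of the corresponding conj(z) w is positive real. *)
Lemma cell_angles_sum (a b c d : Cpx) t1 t2 t3 t4 :
  0 < Cnorm a -> 0 < Cnorm b -> 0 < Cnorm c -> 0 < Cnorm d ->
  is_angle t1 a b -> is_angle t2 b c -> is_angle t3 d c -> is_angle t4 a d ->
  Rabs (t1 + t2 - t3 - t4) < 2 * PI -> t1 + t2 - t3 - t4 = 0.
Proof.
  intros Ha Hb Hc Hd S1 S2 S3 S4 Hs.
  set (P := Cnorm a * Cnorm b * (Cnorm b * Cnorm c) * (Cnorm d * Cnorm c) * (Cnorm a * Cnorm d)).
  assert (HP : 0 < P) by (unfold P; repeat apply Rmult_lt_0_compat; auto).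
  assert (E : Cmul (Cmul (Cmul (Cconj_mul a b) (Cconj_mul b c)) (Cconj (Cconj_mul d c)))
                   (Cconj (Cconj_mul a d)) =
              Cscale P (Cexpi (t1 + t2 - t3 - t4))).
  { unfold is_angle in *. rewrite <- S1, <- S2, <- S3, <- S4.
    replace (Cexpi (t1 + t2 - t3 - t4))
      with (Cmul (Cmul (Cmul (Cexpi t1) (Cexpi t2)) (Cconj (Cexpi t3))) (Cconj (Cexpi t4)))
      by (rewrite Cexpi_add, !Cexpi_sub; reflexivity).
    unfold P, Cscale, Cmul, Cconj; simpl. f_equal; ring. }
  assert (E2 : Cmul (Cmul (Cmul (Cconj_mul a b) (Cconj_mul b c)) (Cconj (Cconj_mul d c)))
                    (Cconj (Cconj_mul a d)) = (P, 0)).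
  { replace P with (Cnorm a ^ 2 * Cnorm b ^ 2 * Cnorm c ^ 2 * Cnorm d ^ 2) by (unfold P; ring).
    rewrite !Cnorm_sq. destruct a, b, c, d.
    unfold Cconj_mul, Cmul, Cconj; simpl. f_equal; ring. }
  rewrite E2 in E. unfold Cscale, Cexpi in E; simpl in E. injection E as Ecos Esin.
  assert (Hcos : cos (t1 + t2 - t3 - t4) = 1) by (apply (Rmult_eq_reg_l P); lra).
  assert (Hsin : sin (t1 + t2 - t3 - t4) = 0) by (apply (Rmult_eq_reg_l P); lra).
  destruct (sin_eq_0_0 _ Hsin) as [k Hk]. rewrite Hk in *.
  rewrite (cos_kpi_1 k Hs Hcos). simpl. ring.
Qed.


(* Discrete Stokes formula on the K x N grid: if every cell has zero circulation,
   the horizontal angles are N-periodic in l and the vertical ones jump by c from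
   column 0 to column K, then the N jumps add up to zero. *)
Lemma grid_circulation (h v : nat -> nat -> R) (K N : nat) c :
  (forall j l, (j < K)%nat -> (l < N)%nat -> h j l + v (S j) l - h j (S l) - v j l = 0) ->
  (forall j, (j < K)%nat -> h j N = h j O) ->
  (forall l, (l < N)%nat -> v K l = c + v O l) ->
  INR N * c = 0.
Proof.
  intros Hcell Hper Hjump. set (row := fun l => rsum (fun j => h j l) K).
  assert (Hrow : forall l, (l < N)%nat -> row (S l) - row l = c).
  { intros l Hl.
    assert (E : rsum (fun j => (h j l - h j (S l)) + (v (S j) l - v j l)) K = 0).
    { rewrite (rsum_ext _ (fun _ => 0)); [rewrite rsum_const; ring |].
      intros j Hj. rewrite <- (Hcell j l Hj Hl). ring. }
    rewrite rsum_plus, rsum_minus, (rsum_tele (fun j => v j l)), Hjump in E by auto.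
    unfold row. lra. }
  rewrite <- rsum_const, (rsum_ext _ (fun l => row (S l) - row l)) by (intros; symmetry; auto).
  rewrite rsum_tele. unfold row. rewrite (rsum_ext _ (fun j => h j O)) by auto. ring.
Qed.

Section Winding.

Variables (g : nat -> nat -> Cpx) (K N : nat) (D y : R).
Hypotheses (HD : 0 < D) (HK : (0 < K)%nat) (HN : (8 <= N)%nat).
Hypothesis g_col : forall l, g K l = Cmul (Cexpi (2 * PI * (y + INR l / INR N))) (g O l).
Hypothesis g_row : forall j, g j N = g j O.
(* Towards a contradiction: g is large and all its increments are small. *)
Hypothesis g_small : forall j l, (j < K)%nat -> (l < N)%nat ->
  D <= Cnorm (g j l) /\ Cnorm (Csub (g (S j) l) (g j l)) <= D / 10 /\
  Cnorm (Csub (g j (S l)) (g j l)) <= D / 10.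

Let hang j l := rel_angle (g j l) (g (S j) l).
Let vang j l := if Nat.eqb j K then 2 * PI / INR N + rel_angle (g O l) (g O (S l))
                else rel_angle (g j l) (g j (S l)).

Lemma INR_N_pos : 0 < INR N.
Proof. apply lt_0_INR; lia. Qed.

Lemma phase_step_small : 0 < 2 * PI / INR N <= PI / 4.
Proof.
  pose proof PI_RGT_0. pose proof INR_N_pos.
  assert (8 <= INR N) by (replace 8 with (INR 8) by (simpl; ring); apply le_INR; auto).
  split; [apply Rdiv_lt_0_compat; lra |].
  apply (Rmult_le_reg_r (INR N)); auto. unfold Rdiv. rewrite Rmult_assoc, Rinv_l by lra. nra.
Qed.

(* g does not vanish on the closed grid, by periodicity and |e^{it}| = 1. *)
Lemma grid_nonzero j l : (j <= K)%nat -> (l <= N)%nat -> 0 < Cnorm (g j l).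
Proof.
  assert (H0 : forall j l, (j <= K)%nat -> (l < N)%nat -> 0 < Cnorm (g j l)).
  { intros j' l' Hj Hl. destruct (Nat.eq_dec j' K) as [-> |].
    - rewrite g_col, Cnorm_rot. destruct (g_small O l'); lia || lra.
    - destruct (g_small j' l'); lia || lra. }
  intros Hj Hl. destruct (Nat.eq_dec l N) as [-> |]; [rewrite g_row |]; apply H0; lia.
Qed.

(* Horizontal steps turn by less than pi/4 (rows 0 and N coincide). *)
Lemma hang_spec j l : (j < K)%nat -> (l <= N)%nat ->
  is_angle (hang j l) (g j l) (g (S j) l) /\ Rabs (hang j l) < PI / 4.
Proof.
  assert (H0 : forall j l, (j < K)%nat -> (l < N)%nat ->
     is_angle (hang j l) (g j l) (g (S j) l) /\ Rabs (hang j l) < PI / 4).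
  { intros j' l' Hj Hl. destruct (g_small j' l' Hj Hl) as [H1 [H2 _]].
    destruct (rel_angle_small D _ _ HD H1 H2). split; auto. apply rel_angle_is_angle; auto. }
  intros Hj Hl. destruct (Nat.eq_dec l N) as [-> |]; [unfold hang; rewrite !g_row |]; apply H0; lia.
Qed.

(* On column K the angle is that of column 0 plus the phase increment 2 pi / N. *)
Lemma vang_spec j l : (j <= K)%nat -> (l < N)%nat ->
  is_angle (vang j l) (g j l) (g j (S l)) /\ Rabs (vang j l) < PI / 2.
Proof.
  intros Hj Hl. pose proof PI_RGT_0 as Hpi. pose proof phase_step_small as Hstep.
  pose proof INR_N_pos as HN0.
  unfold vang. destruct (Nat.eqb_spec j K) as [-> |].
  - destruct (g_small O l HK Hl) as [H1 [_ H3]].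
    destruct (rel_angle_small D _ _ HD H1 H3) as [H4 H5]. rewrite !g_col. split.
    + replace (2 * PI / INR N) with (2 * PI * (y + INR (S l) / INR N) - 2 * PI * (y + INR l / INR N))
        by (rewrite S_INR; field; lra).
      apply is_angle_rot, rel_angle_is_angle; auto.
    + apply Rabs_def2 in H5. apply Rabs_def1; lra.
  - destruct (g_small j l ltac:(lia) Hl) as [H1 [_ H3]].
    destruct (rel_angle_small D _ _ HD H1 H3) as [H4 H5].
    split; [apply rel_angle_is_angle; auto | lra].
Qed.

(* Each cell has zero circulation: the total lies in 2 pi Z and is < 2 pi in modulus. *)
Lemma cell_circulation j l : (j < K)%nat -> (l < N)%nat ->
  hang j l + vang (S j) l - hang j (S l) - vang j l = 0.
Proof.
  intros Hj Hl.
  destruct (hang_spec j l Hj ltac:(lia)) as [A1 B1]. destruct (vang_spec (S j) l Hj Hl) as [A2 B2].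
  destruct (hang_spec j (S l) Hj Hl) as [A3 B3]. destruct (vang_spec j l ltac:(lia) Hl) as [A4 B4].
  apply (cell_angles_sum (g j l) (g (S j) l) (g (S j) (S l)) (g j (S l)));
    auto; try (apply grid_nonzero; lia).
  pose proof PI_RGT_0. apply Rabs_def2 in B1, B2, B3, B4. apply Rabs_def1; lra.
Qed.

(* The N phase jumps of size 2 pi / N cannot add up to zero. *)
Lemma winding_contradiction : False.
Proof.
  assert (H : INR N * (2 * PI / INR N) = 0).
  { apply (grid_circulation hang vang K N).
    - exact cell_circulation.
    - intros j _. unfold hang. rewrite !g_row. reflexivity.
    - intros l _. unfold vang. rewrite Nat.eqb_refl.
      destruct (Nat.eqb_spec O K); [lia | reflexivity]. }
  pose proof INR_N_pos. pose proof PI_RGT_0.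
  replace (INR N * (2 * PI / INR N)) with (2 * PI) in H by (field; lra). lra.
Qed.

End Winding.

Lemma grid_large_increment (G : R -> R -> Cpx) (D : R) (K N : nat) (x y : R) :
  0 < D -> (0 < K)%nat -> (8 <= N)%nat -> quasi_periodic G ->
  (forall j l, (j < K)%nat -> (l < N)%nat -> D <= Cnorm (G (x + INR j / INR K) (y + INR l / INR N))) ->
  exists j l, (j < K)%nat /\ (l < N)%nat /\
   (Cnorm (Csub (G (x + INR j / INR K + 1 / INR K) (y + INR l / INR N))
                (G (x + INR j / INR K) (y + INR l / INR N))) > D / 10 \/
    Cnorm (Csub (G (x + INR j / INR K) (y + INR l / INR N + 1 / INR N))
                (G (x + INR j / INR K) (y + INR l / INR N))) > D / 10).
Proof.
  intros HD HK HN HQ Hbig. apply NNPP. intros Hcon.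
  assert (HK0 : 0 < INR K) by (apply lt_0_INR; lia).
  assert (HN0 : 0 < INR N) by (apply lt_0_INR; lia).
  set (g := fun j l => G (x + INR j / INR K) (y + INR l / INR N)).
  apply (winding_contradiction g K N D y HD HK HN).
  - intros l. unfold g. replace (x + INR K / INR K) with (x + 1) by (field; lra).
    replace (x + INR 0 / INR K) with x by (simpl; field; lra). apply HQ.
  - intros j. unfold g. replace (y + INR N / INR N) with (y + 1) by (field; lra).
    replace (y + INR 0 / INR N) with y by (simpl; field; lra). apply HQ.
  - intros j l Hj Hl. unfold g. rewrite !S_INR.
    replace ((INR j + 1) / INR K) with (INR j / INR K + 1 / INR K) by (field; lra).
    replace ((INR l + 1) / INR N) with (INR l / INR N + 1 / INR N) by (field; lra).
    rewrite <- !Rplus_assoc.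
    split; [apply Hbig; auto |].
    split; apply Rnot_lt_le; intros Hc; apply Hcon; exists j, l; tauto.
Qed.


Definition tile (K N j l : nat) : rect :=
  Rect (INR j / INR K) (INR (S j) / INR K) (INR l / INR N) (INR (S l) / INR N).

Definition clip (r t : rect) : rect :=
  Rect (Rmax (ra1 r) (ra1 t)) (Rmin (rb1 r) (rb1 t)) (Rmax (ra2 r) (ra2 t)) (Rmin (rb2 r) (rb2 t)).

Lemma in_clip r t x y : in_rect r x y -> in_rect t x y -> in_rect (clip r t) x y.
Proof. unfold in_rect, clip; simpl. intros. unfold Rmax, Rmin; repeat destruct Rle_dec; lra. Qed.

Lemma length_partition (a b : R) (t : nat -> R) n : (forall j, t j <= t (S j)) ->
  rsum (fun j => Rmax 0 (Rmin b (t (S j)) - Rmax a (t j))) n <= Rmax 0 (Rmin b (t n) - Rmax a (t O)).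
Proof.
  intros Ht. assert (Hm : forall n, t O <= t n) by (induction n0; [lra | specialize (Ht n0); lra]).
  induction n; [simpl; apply Rmax_l |].
  cbn [rsum]. specialize (Hm n). specialize (Ht n).
  eapply Rle_trans; [apply Rplus_le_compat_r, IHn |].
  unfold Rmax, Rmin; repeat destruct Rle_dec; lra.
Qed.

Lemma tiles_area (K N : nat) r : (0 < K)%nat -> (0 < N)%nat ->
  rsum (fun j => rsum (fun l => area (clip r (tile K N j l))) N) K <= area r.
Proof.
  intros HK HN.
  assert (Hmono : forall M : nat, (0 < M)%nat -> forall j, INR j / INR M <= INR (S j) / INR M).
  { intros M HM j. assert (0 < INR M) by (apply lt_0_INR; lia). unfold Rdiv.
    apply Rmult_le_compat_r; [left; apply Rinv_0_lt_compat; auto | rewrite S_INR; lra]. }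
  unfold area, clip, tile; simpl.
  rewrite (rsum_ext _ (fun j => Rmax 0 (Rmin (rb1 r) (INR (S j) / INR K) - Rmax (ra1 r) (INR j / INR K)) *
      rsum (fun l => Rmax 0 (Rmin (rb2 r) (INR (S l) / INR N) - Rmax (ra2 r) (INR l / INR N))) N))
    by (intros; rewrite <- rsum_scal; reflexivity).
  rewrite rsum_mul_r. apply Rmult_le_compat; try (apply rsum_ge0; intros; apply Rmax_l).
  - eapply Rle_trans; [apply (length_partition _ _ (fun j => INR j / INR K)); auto |].
    unfold Rmax, Rmin; repeat destruct Rle_dec; lra.
  - eapply Rle_trans; [apply (length_partition _ _ (fun l => INR l / INR N)); auto |].
    unfold Rmax, Rmin; repeat destruct Rle_dec; lra.
Qed.

Definition tile_piece (K N : nat) (r : rect) (i : nat) : rect :=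
  let j := fst (of_nat i) in let l := snd (of_nat i) in
  if (Nat.ltb j K && Nat.ltb l N)%bool
  then shift_rect (INR j / INR K) (INR l / INR N) (clip r (tile K N j l)) else empty_rect.

Lemma tile_pieces_area K N r M : (0 < K)%nat -> (0 < N)%nat ->
  rsum (fun i => area (tile_piece K N r i)) M <= area r.
Proof.
  intros HK HN.
  set (F := fun p : nat * nat => if (Nat.ltb (fst p) K && Nat.ltb (snd p) N)%bool
              then area (clip r (tile K N (fst p) (snd p))) else 0).
  assert (HF : forall p, 0 <= F p) by (intros p; unfold F; destruct (_ && _)%bool; [apply area_ge0 | lra]).
  rewrite (rsum_ext _ (fun i => F (of_nat i))).
  2: { intros i _. unfold tile_piece, F. destruct (_ && _)%bool;
       [apply area_shift_rect | apply area_empty_rect]. }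
  eapply Rle_trans; [apply cantor_reindex; auto |].
  eapply Rle_trans; [apply (rsum_cut _ K) |].
  - intros j Hj. rewrite (rsum_ext _ (fun _ => 0)); [rewrite rsum_const; ring |].
    intros l _. unfold F; cbn [fst snd].
    replace (Nat.ltb j K) with false by (symmetry; apply Nat.ltb_ge; auto). reflexivity.
  - intros j. apply rsum_ge0; auto.
  - eapply Rle_trans; [| apply (tiles_area K N r HK HN)]. apply rsum_le. intros j Hj.
    eapply Rle_trans; [apply (rsum_cut _ N) |].
    + intros l Hl. unfold F; cbn [fst snd].
      replace (Nat.ltb l N) with false by (symmetry; apply Nat.ltb_ge; auto).
      rewrite Bool.andb_false_r. reflexivity.
    + auto.
    + right. apply rsum_ext. intros l Hl. unfold F; cbn [fst snd].
      replace (Nat.ltb j K) with true by (symmetry; apply Nat.ltb_lt; auto).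
      replace (Nat.ltb l N) with true by (symmetry; apply Nat.ltb_lt; auto). reflexivity.
Qed.

(* Folding A into the tile at the origin: translating the part of A in each
   tile (j, l) back by (j/K, l/N) does not increase the outer measure. *)
Definition fold_tiles (K N : nat) (A : set2) : set2 := fun x y =>
  exists j l, (j < K)%nat /\ (l < N)%nat /\
    in_rect (tile K N j l) (x + INR j / INR K) (y + INR l / INR N) /\
    A (x + INR j / INR K) (y + INR l / INR N).

Lemma outer_le_fold_tiles K N A v : (0 < K)%nat -> (0 < N)%nat ->
  outer_le A v -> outer_le (fold_tiles K N A) v.
Proof.
  intros HK HN HA eps He. pose proof (outer_le_ge0 _ _ HA).
  destruct (HA eps He) as [c [Hc Hs]].
  exists (merge_covers (fun i m => tile_piece K N (c m) i)). split.
  - intros x y [j [l [Hj [Hl [Ht HAxy]]]]]. destruct (Hc _ _ HAxy) as [m Hm].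
    exists (to_nat (to_nat (j, l), m)). unfold merge_covers, tile_piece.
    rewrite cancel_of_to; cbn [fst snd]; rewrite cancel_of_to; cbn [fst snd].
    replace (Nat.ltb j K) with true by (symmetry; apply Nat.ltb_lt; auto).
    replace (Nat.ltb l N) with true by (symmetry; apply Nat.ltb_lt; auto).
    apply in_shift_rect, in_clip; auto.
  - intros n. rewrite sum_f_R0_rsum. apply merge_covers_sum.
    intros [|M]; [simpl; lra |]. rewrite rsum_swap.
    eapply Rle_trans; [apply (rsum_le _ (fun m => area (c m))) |].
    + intros m _. apply tile_pieces_area; auto.
    + rewrite <- sum_f_R0_rsum. apply Hs.
Qed.

Lemma translate_in_tile K N j l x y : (j < K)%nat -> (l < N)%nat ->
  0 <= x <= 1 / INR K -> 0 <= y <= 1 / INR N ->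
  in_rect (tile K N j l) (x + INR j / INR K) (y + INR l / INR N) /\
  0 <= x + INR j / INR K <= 1 /\ 0 <= y + INR l / INR N <= 1.
Proof.
  intros Hj Hl Hx Hy.
  assert (Hstep : forall (i M : nat) t, (i < M)%nat -> 0 <= t <= 1 / INR M ->
            INR i / INR M <= t + INR i / INR M <= INR (S i) / INR M /\ 0 <= t + INR i / INR M <= 1).
  { intros i M t Hi Ht. assert (HM : 0 < INR M) by (apply lt_0_INR; lia).
    assert (INR (S i) <= INR M) by (apply le_INR; lia). rewrite S_INR in *. pose proof (pos_INR i).
    replace ((INR i + 1) / INR M) with (INR i / INR M + 1 / INR M) by (field; lra).
    assert (0 <= INR i / INR M) by (apply Rmult_le_pos; [lra | left; apply Rinv_0_lt_compat; lra]).
    assert (INR i / INR M + 1 / INR M <= 1).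
    { replace (INR i / INR M + 1 / INR M) with ((INR i + 1) / INR M) by (field; lra).
      apply (Rmult_le_reg_r (INR M)); auto. unfold Rdiv.
      rewrite Rmult_assoc, Rinv_l, Rmult_1_r; lra. }
    lra. }
  destruct (Hstep j K x Hj Hx), (Hstep l N y Hl Hy). unfold in_rect, tile; simpl. tauto.
Qed.

Lemma null_grid_translates (A : set2) K N : null_set A ->
  null_set (fun x y => exists j l, (j < K)%nat /\ (l < N)%nat /\
                         A (x + INR j / INR K) (y + INR l / INR N)).
Proof.
  intros HA. eapply outer_le_mono.
  2: { apply (null_Union (fun n x y => A (x + INR (fst (of_nat n)) / INR K)
                                         (y + INR (snd (of_nat n)) / INR N))).
       intros n. apply outer_le_shift, HA. }
  intros x y [j [l [_ [_ H]]]]. exists (to_nat (j, l)). rewrite cancel_of_to. exact H.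
Qed.

Lemma outer_ge_of_le (A : set2) v : (forall w, outer_le A w -> v <= w) -> outer_ge A v.
Proof.
  intros H c Hc eps He. apply NNPP. intros Hneg. assert (v <= v - eps); [| lra].
  apply H, (outer_le_of_cover A c); auto.
  intros n. apply Rnot_lt_le. intros Hl. apply Hneg. exists n. lra.
Qed.


Definition jump_set (G : R -> R -> Cpx) (K N : nat) (delta : R) : set2 := fun x y =>
  (0 <= x <= 1 /\ 0 <= y <= 1) /\
  (Cnorm (Csub (G (x + 1 / INR K) y) (G x y)) > delta \/
   Cnorm (Csub (G x (y + 1 / INR N)) (G x y)) > delta).

Lemma jump_set_measurable G K N delta : measurable_fun G -> measurable2 (jump_set G K N delta).
Proof.
  intros HG. apply meas_inter2; [apply (meas_rect (Rect 0 1 0 1)) | apply meas_union2].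
  - refine (meas_ext _ _ _ (meas_increment G (1 / INR K) 0 delta HG)).
    intros x y. rewrite Rplus_0_r. tauto.
  - refine (meas_ext _ _ _ (meas_increment G 0 (1 / INR N) delta HG)).
    intros x y. rewrite Rplus_0_r. tauto.
Qed.

Lemma box_covered_by_folded_jump_set G D K N x y :
  0 < D -> (0 < K)%nat -> (8 <= N)%nat -> quasi_periodic G ->
  0 <= x <= 1 / INR K -> 0 <= y <= 1 / INR N ->
  (exists j l, (j < K)%nat /\ (l < N)%nat /\ Cnorm (G (x + INR j / INR K) (y + INR l / INR N)) < D) \/
  fold_tiles K N (jump_set G K N (D / 10)) x y.
Proof.
  intros HD HK HN HQ Hx Hy.
  destruct (classic (exists j l, (j < K)%nat /\ (l < N)%nat /\
                       Cnorm (G (x + INR j / INR K) (y + INR l / INR N)) < D)) as [Hbad | Hgood];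
    [left; exact Hbad | right].
  destruct (grid_large_increment G D K N x y HD HK HN HQ) as [j [l [Hj [Hl Hjump]]]].
  { intros j l Hj Hl. apply Rnot_lt_le. intros Hlt. apply Hgood. exists j, l. auto. }
  destruct (translate_in_tile K N j l x y Hj Hl Hx Hy) as [Ht [Hx1 Hy1]].
  exists j, l. unfold jump_set. tauto.
Qed.

Lemma jump_set_lower_bound G D K N w :
  0 < D -> (0 < K)%nat -> (8 <= N)%nat -> quasi_periodic G ->
  null_set (fun x y => Cnorm (G x y) < D) ->
  outer_le (jump_set G K N (D / 10)) w -> 1 / (INR N * INR K) <= w.
Proof.
  intros HD HK HN HQ Hnull Hw.
  assert (HK0 : 0 < INR K) by (apply lt_0_INR; lia).
  assert (HN0 : 0 < INR N) by (apply lt_0_INR; lia).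
  apply Rle_plus_epsilon. intros e He.
  replace (1 / (INR N * INR K)) with ((1 / INR K - 0) * (1 / INR N - 0)) by (field; lra).
  apply outer_le_box_area;
    [left; apply Rdiv_lt_0_compat; lra | left; apply Rdiv_lt_0_compat; lra |].
  eapply outer_le_mono.
  2: { apply outer_le_union_null; [apply (null_grid_translates _ K N Hnull) | | exact He].
       apply (outer_le_fold_tiles K N); [exact HK | lia | exact Hw]. }
  intros x y [Hx Hy]. apply box_covered_by_folded_jump_set; auto.
Qed.

Theorem lemma3 :
  forall D : R, 0 < D ->
  exists delta : R, 0 < delta /\
  forall (K N : nat), (8 <= K)%nat -> (8 <= N)%nat ->
  forall G : R -> R -> Cpx,
    measurable_fun G -> quasi_periodic G ->
    null_set (fun x y => Cnorm (G x y) < D) ->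
    exists S : set2,
      measurable2 S /\
      (forall x y, S x y -> 0 <= x <= 1 /\ 0 <= y <= 1) /\
      outer_ge S (1 / (INR N * INR K)) /\
      (forall x y, S x y ->
         Cnorm (Csub (G (x + 1 / INR K) y) (G x y)) >= delta \/
         Cnorm (Csub (G x (y + 1 / INR N)) (G x y)) >= delta).
Proof.
  intros D HD. exists (D / 10). split; [lra |].
  intros K N HK HN G HGm HQ Hnull.
  exists (jump_set G K N (D / 10)). split; [| split; [| split]].
  - apply jump_set_measurable, HGm.
  - intros x y [Hsq _]. exact Hsq.
  - apply outer_ge_of_le. intros w Hw.
    apply (jump_set_lower_bound G D K N w); auto; lia.
  - intros x y [_ [H | H]]; [left | right]; lra.
Qed.
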